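(* Let $R$ be a supertropical semiring, $V$ a free $R$-module with base $(\varepsilon_i\mid i\in I)$, $q:V\to R$ a quadratic form, and $x\in V\setminus\{0\}$ a $q$-minimal vector. Then $|\operatorname{supp}(x)|\le 2$ if $q(x)\in\mathcal T$, and $|\operatorname{supp}(x)|\le4$ if $q(x)\in\mathcal G$.
   Context: All semirings are commutative with $1$. A semiring $R$ is supertropical if $e:=1+1$ satisfies $e+e=e$ and, for all $x,y\in R$: if $ex\neq ey$ then $x+y\in\{x,y\}$, and if $ex=ey$ then $x+y=ey$. $\mathcal T=R\setminus eR$, $\mathcal G=eR\setminus\{0\}$. A quadratic form on an $R$-module $V$ is a map $q:V\to R$ with $q(ax)=a^2q(x)$ such that some symmetric bilinear $b$ (a companion) satisfies $q(x+y)=q(x)+q(y)+b(x,y)$. Every $R$-module $V$ (and $R$ itself) carries the minimal ordering $x\le y\iff\exists z:\ x+z=y$, a partial order; $x<y$ means $x\le y$, $x\ne y$. A vector $x\in V$ is $q$-minimal if there is no $x'<x$ with $q(x')=q(x)$. For $x=\sum_i x_i\varepsilon_i$, $\operatorname{supp}(x)=\{i\in I: x_i\neq0\}$. *)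

From HB Require Import structures.
From mathcomp Require Import all_boot all_order all_algebra.
From Stdlib Require List.
Set Implicit Arguments. Unset Strict Implicit. Unset Printing Implicit Defensive.
Import GRing.Theory.
Local Open Scope ring_scope.

Definition supertropical (R : comPzSemiRingType) : Prop :=
  let e : R := 1 + 1 in
  e + e = e /\
  (forall x y : R, e * x != e * y -> x + y = x \/ x + y = y) /\
  (forall x y : R, e * x = e * y -> x + y = e * y).

Definition tangible (R : comPzSemiRingType) (x : R) : Prop :=
  ~ (exists y : R, x = (1 + 1) * y).
Definition ghost (R : comPzSemiRingType) (x : R) : Prop :=
  (exists y : R, x = (1 + 1) * y) /\ x <> 0.

(** The free R-module with base (eps_i | i in I): finitely supported
    coordinate functions I -> R. *)
Definition fin_supp (I : Type) (R : nmodType) (f : I -> R) : Prop :=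
  exists s : seq I, forall i, f i != 0 -> List.In i s.

Definition freemod (I : Type) (R : nmodType) := {f : I -> R | fin_supp f}.

Definition coord (I : Type) (R : nmodType) (x : freemod I R) : I -> R :=
  proj1_sig x.

Lemma fin_supp0 (I : Type) (R : nmodType) : fin_supp (fun _ : I => (0 : R)).
Proof. by exists [::] => i; rewrite eqxx. Qed.

Lemma fin_suppD (I : Type) (R : nmodType) (f g : I -> R) :
  fin_supp f -> fin_supp g -> fin_supp (fun i => f i + g i).
Proof.
move=> [s Hs] [t Ht]; exists (s ++ t) => i Hi; apply: List.in_or_app.
case: (eqVneq (f i) 0) => [Hf|Hf]; last by left; apply: Hs.
by right; apply: Ht; move: Hi; rewrite Hf add0r.
Qed.

Lemma fin_suppZ (I : Type) (R : pzSemiRingType) (a : R) (f : I -> R) :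
  fin_supp f -> fin_supp (fun i => a * f i).
Proof.
move=> [s Hs]; exists s => i Hi; apply: Hs.
by apply: contraNneq Hi => ->; rewrite mulr0.
Qed.

Definition vzero (I : Type) (R : nmodType) : freemod I R :=
  exist _ (fun _ => 0) (@fin_supp0 I R).

Definition vadd (I : Type) (R : nmodType) (x y : freemod I R) : freemod I R :=
  exist _ (fun i => coord x i + coord y i)
    (fin_suppD (proj2_sig x) (proj2_sig y)).

Definition vscale (I : Type) (R : pzSemiRingType) (a : R) (x : freemod I R)
  : freemod I R :=
  exist _ (fun i => a * coord x i) (fin_suppZ a (proj2_sig x)).

Definition is_quadratic_form (I : Type) (R : comPzSemiRingType)
  (q : freemod I R -> R) : Prop :=
  (forall (a : R) (x : freemod I R), q (vscale a x) = a ^+ 2 * q x) /\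
  exists b : freemod I R -> freemod I R -> R,
    (forall x y, b x y = b y x) /\
    (forall x y z, b (vadd x y) z = b x z + b y z) /\
    (forall (a : R) x y, b (vscale a x) y = a * b x y) /\
    (forall x y, q (vadd x y) = q x + q y + b x y).

Definition vle (I : Type) (R : nmodType) (x y : freemod I R) : Prop :=
  exists z, vadd x z = y.
Definition vlt (I : Type) (R : nmodType) (x y : freemod I R) : Prop :=
  vle x y /\ x <> y.

Definition q_minimal (I : Type) (R : comPzSemiRingType)
  (q : freemod I R -> R) (x : freemod I R) : Prop :=
  ~ (exists x', vlt x' x /\ q x' = q x).

Definition supp_card_le (I : Type) (R : nmodType) (x : freemod I R) (n : nat)
  : Prop :=
  exists s : seq I, (size s <= n)%N /\
    (forall i, coord x i != 0 -> List.In i s).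

(* Write x = sum_k x_k with x_k = x_(i_k) eps_(i_k) running over the support
   of x.  Then q(x) is the finite sum of the q(x_k) and b(x_l, x_k), l < k.  In
   a supertropical semiring such a sum equals its nu-largest term if that term
   is unique and e times it otherwise, so it is already attained by two of its
   terms, and by one if it is tangible.  The subsum x' of the x_k occurring in
   these terms, at most four (two) of them, satisfies x' <= x and
   q(x') = q(x), hence x' = x by minimality. *)

From Stdlib Require Import ClassicalEpsilon FunctionalExtensionality ProofIrrelevance.
From Stdlib Require List.
From HB Require Import structures.
From mathcomp Require Import all_boot all_order all_algebra.
Set Implicit Arguments. Unset Strict Implicit. Unset Printing Implicit Defensive.
Import GRing.Theory.
Local Open Scope ring_scope.

Section Supertropical.
Variable R : comPzSemiRingType.
Hypothesis HR : supertropical R.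
Local Notation e := (1 + 1 : R).

Lemma mul_ee : e * e = e.
Proof. by rewrite mulrDr mulr1; case: HR. Qed.

Lemma mul_eeA a : e * (e * a) = e * a.
Proof. by rewrite mulrA mul_ee. Qed.

Lemma addr_nu_neq a b : e * a != e * b -> a + b = a \/ a + b = b.
Proof. by case: HR => _ [H _]; apply: H. Qed.

Lemma addr_nu_eq a b : e * a = e * b -> a + b = e * b.
Proof. by case: HR => _ [_ H]; apply: H. Qed.

(* [nu_le a b] says e a <= e b in the ghost ideal eR, where addition is the
   maximum. *)
Definition nu_le (a b : R) := e * a + e * b = e * b.

Lemma nu_le_refl a : nu_le a a.
Proof. by rewrite /nu_le (@addr_nu_eq (e * a) (e * a) erefl) mul_eeA. Qed.

Lemma nu_le_trans a b c : nu_le a b -> nu_le b c -> nu_le a c.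
Proof. by rewrite /nu_le => Hab Hbc; rewrite -Hbc addrA Hab. Qed.

Lemma nu_le_total a b : nu_le a b \/ nu_le b a.
Proof.
have [Hab|Hab] := eqVneq (e * a) (e * b).
  by left; rewrite /nu_le Hab; apply: nu_le_refl.
have : e * (e * a) != e * (e * b) by rewrite !mul_eeA.
by case/addr_nu_neq => H; [right; rewrite /nu_le addrC | left].
Qed.

Lemma addr_ghost_absorb a c : nu_le c a -> e * a + c = e * a.
Proof.
move=> Hca; have [H|H] := eqVneq (e * (e * a)) (e * c).
  by rewrite (addr_nu_eq H) -H mul_eeA.
case/addr_nu_neq: (H) => // Hc.
have : e * (e * a + c) = e * c by rewrite Hc.
by rewrite mulrDr mul_eeA addrC Hca => Hac; rewrite mul_eeA Hac eqxx in H.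
Qed.

Lemma addr_tangible_absorb a c : nu_le c a -> e * c != e * a -> a + c = a.
Proof.
move=> Hca Hne; rewrite eq_sym in Hne.
case/addr_nu_neq: (Hne) => // Hc.
have : e * (a + c) = e * c by rewrite Hc.
by rewrite mulrDr addrC Hca => Hac; rewrite Hac eqxx in Hne.
Qed.

Lemma exists_nu_max (T : eqType) (F : T -> R) (s : seq T) (d : T) :
  exists k, forall j, j \in s -> nu_le (F j) (F k).
Proof.
elim: s => [|h s [m Hm]]; first by exists d.
have [Hhm|Hmh] := nu_le_total (F h) (F m).
  by exists m => j; rewrite inE => /predU1P [->|/Hm].
exists h => j; rewrite inE => /predU1P [->|/Hm Hj]; first exact: nu_le_refl.
exact: nu_le_trans Hmh.
Qed.

Section NuMaximum.
Variables (T : finType) (F : T -> R) (k : T).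
Hypothesis F_max : forall j, nu_le (F j) (F k).

Lemma big_nu_max_tangible (M : pred T) :
  M k -> (forall j, j != k -> e * F j != e * F k) -> \sum_(p | M p) F p = F k.
Proof.
move=> Mk Hneq; rewrite (bigD1 k) //=.
apply: (big_ind (fun r => F k + r = F k)) => [|r1 r2 H1 H2|p /andP [_ Hpk]].
- by rewrite addr0.
- by rewrite addrA H1 H2.
- exact: addr_tangible_absorb (Hneq _ Hpk).
Qed.

Lemma big_nu_max_ghost (M : pred T) j :
  j != k -> e * F j = e * F k -> M j -> M k -> \sum_(p | M p) F p = e * F k.
Proof.
move=> Hjk Hj Mj Mk; rewrite (bigD1 k) //= (bigD1 j) /=; last by rewrite Mj Hjk.
rewrite addrA [F k + F j]addrC (addr_nu_eq Hj).
apply: (big_ind (fun r => e * F k + r = e * F k)) => [|r1 r2 H1 H2|p _].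
- by rewrite addr0.
- by rewrite addrA H1 H2.
- exact: addr_ghost_absorb.
Qed.
End NuMaximum.

Lemma big_dominant_terms (T : finType) (F : T -> R) :
  exists C : seq T, [/\ (size C <= 2)%N,
    tangible (\sum_p F p) -> (size C <= 1)%N &
    forall M : pred T, {subset C <= M} -> \sum_(p | M p) F p = \sum_p F p].
Proof.
have [d _|T0] := pickP (@predT T); last first.
  by exists [::]; split=> // M _; rewrite !big_pred0 // => p; have := T0 p.
have [k Hk] := exists_nu_max F (enum T) d.
have {}Hk j : nu_le (F j) (F k) by apply: Hk; rewrite mem_enum.
have [/existsP [j /andP [Hjk /eqP Hj]] | /existsPn Hn] :=
  boolP [exists j, (j != k) && (e * F j == e * F k)].
- have sumE := big_nu_max_ghost Hk Hjk Hj.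
  exists [:: j; k]; split=> // [[]|M CM]; first by exists (F k); rewrite sumE.
  by rewrite !sumE //; apply: CM; rewrite !inE eqxx ?orbT.
- have Hneq i : i != k -> e * F i != e * F k by have := Hn i; case: (i != k).
  exists [:: k]; split=> // M CM.
  by rewrite !(big_nu_max_tangible Hk) //; apply: CM; rewrite inE.
Qed.
End Supertropical.

Lemma nth_error_size (T : Type) (s : seq T) k :
  (k < size s)%N = isSome (List.nth_error s k).
Proof. by elim: s k => [|a s IH] [|k] //=; rewrite ltnS IH. Qed.

Section FreeModule.
Variables (R : comPzSemiRingType) (I : Type).
Local Notation V := (freemod I R).
Local Notation vsum n u := (\big[@vadd I R/vzero I R]_(k < n) u k).

Lemma freemod_ext (x y : V) : coord x =1 coord y -> x = y.
Proof.
case: x y => [f fP] [g gP] /= /functional_extensionality fg; subst g.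
by rewrite (proof_irrelevance _ fP gP).
Qed.

Lemma vaddA : associative (@vadd I R).
Proof. by move=> x y z; apply: freemod_ext => i /=; rewrite addrA. Qed.

Lemma vaddC : commutative (@vadd I R).
Proof. by move=> x y; apply: freemod_ext => i /=; rewrite addrC. Qed.

Lemma vadd0v : left_id (vzero I R) (@vadd I R).
Proof. by move=> x; apply: freemod_ext => i /=; rewrite add0r. Qed.

HB.instance Definition _ := Monoid.isComLaw.Build V (vzero I R) (@vadd I R) vaddA vaddC vadd0v.

Lemma coord_vsum n (u : nat -> V) j : coord (vsum n u) j = \sum_(k < n) coord (u k) j.
Proof. by apply: (big_morph (fun v : V => coord v j) (id1 := 0) (op1 := +%R)). Qed.

Definition vmask (P : pred nat) (u : nat -> V) k := if P k then u k else vzero I R.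

Lemma vle_vsum_vmask n P (u : nat -> V) : vle (vsum n (vmask P u)) (vsum n u).
Proof.
exists (vsum n (vmask (predC P) u)); rewrite -big_split; apply: eq_bigr => k _.
by rewrite /vmask /=; case: (P k); rewrite ?Monoid.mulm1 ?Monoid.mul1m.
Qed.

Lemma q_minimal_eq (q : V -> R) x y : q_minimal q x -> vle y x -> q y = q x -> y = x.
Proof.
move=> xmin yx qyx; apply: Classical_Prop.NNPP => y_neq_x.
by apply: xmin; exists y.
Qed.

Lemma supp_card_le_leq (x : V) m n : (m <= n)%N -> supp_card_le x m -> supp_card_le x n.
Proof. by move=> mn [s [sm Hs]]; exists s; split=> //; apply: leq_trans mn. Qed.

Lemma vsingle_fin_supp (i : I) (a : R) :
  fin_supp (fun j => if excluded_middle_informative (j = i) then a else 0).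
Proof.
exists [:: i] => j; case: (excluded_middle_informative (j = i)) => [ji|nji].
  by left.
by rewrite eqxx.
Qed.

Definition vsingle (i : I) (a : R) : V := exist _ _ (vsingle_fin_supp i a).

Lemma exists_supp_list (x : V) :
  exists s : seq I, List.NoDup s /\ forall i, List.In i s <-> coord x i != 0.
Proof.
have [s0 s0P] := proj2_sig x.
pose dec i j := excluded_middle_informative (i = j :> I).
exists (List.filter (fun i => coord x i != 0) (List.nodup dec s0)); split.
  exact/List.NoDup_filter/List.NoDup_nodup.
move=> i; rewrite List.filter_In List.nodup_In.
by split=> [[_ ->] //|xi]; split=> //; apply: s0P.
Qed.

Section SupportDecomposition.
Variables (x : V) (s : seq I).
Hypothesis s_nodup : List.NoDup s.
Hypothesis s_supp : forall i, List.In i s <-> coord x i != 0.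

Definition supp_term k : V :=
  if List.nth_error s k is Some i then vsingle i (coord x i) else vzero I R.

Lemma coord_vsum_vmask_out P j :
  ~ List.In j s -> coord (vsum (size s) (vmask P supp_term)) j = 0.
Proof.
move=> js; rewrite coord_vsum big1 // => k _; rewrite /vmask /supp_term.
case: (P k) => //; case Ek: List.nth_error => [i|] //=.
by case: excluded_middle_informative => // ji; case: js; rewrite ji; apply: List.nth_error_In Ek.
Qed.

Lemma coord_vsum_vmask_at P k0 j : List.nth_error s k0 = Some j ->
  coord (vsum (size s) (vmask P supp_term)) j = if P k0 then coord x j else 0.
Proof.
move=> Ek0; have k0s : (k0 < size s)%N by rewrite nth_error_size Ek0.
rewrite coord_vsum (bigD1 (Ordinal k0s)) //= big1 ?addr0.
  rewrite /vmask /supp_term Ek0; case: (P k0) => //=.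
  by case: excluded_middle_informative.
move=> k /eqP kk0; rewrite /vmask /supp_term.
case: (P k) => //; case Ek: List.nth_error => [i|] //=.
case: excluded_middle_informative => // ji; case: kk0; apply: val_inj => /=.
apply: (proj1 (List.NoDup_nth_error s) s_nodup).
  by apply/List.nth_error_Some; rewrite Ek.
by rewrite Ek Ek0 ji.
Qed.

Lemma vsum_supp_term : vsum (size s) supp_term = x.
Proof.
apply: freemod_ext => j; case: (Classical_Prop.classic (List.In j s)) => js.
  by have [k Ek] := List.In_nth_error _ _ js; rewrite -(coord_vsum_vmask_at xpredT Ek).
rewrite (coord_vsum_vmask_out xpredT js).
by apply/esym; have [//|/s_supp] := eqVneq (coord x j) 0.
Qed.

Lemma vsum_vmask_supp_term (K : seq nat) :
  vsum (size s) (vmask (mem K) supp_term) = x -> (size s <= size K)%N.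
Proof.
move=> Kx; rewrite -[X in (X <= _)%N](size_iota 0); apply: uniq_leq_size (iota_uniq 0 _) _ => k.
rewrite mem_iota add0n nth_error_size; case Ek: List.nth_error => [j|] // _.
have := coord_vsum_vmask_at (mem K) Ek; rewrite Kx; case: ifP => // _ xj0.
by have := List.nth_error_In _ _ Ek; rewrite s_supp xj0 eqxx.
Qed.

Lemma supp_card_le_size : supp_card_le x (size s).
Proof. by exists s; split=> // i /s_supp. Qed.
End SupportDecomposition.

Lemma vscale0 (x : V) : vscale 0 x = vzero I R.
Proof. by apply: freemod_ext => i /=; rewrite mul0r. Qed.

Section QuadraticForm.
Variables (q : V -> R) (b : V -> V -> R).
Hypothesis qZ : forall (a : R) (x : V), q (vscale a x) = a ^+ 2 * q x.
Hypothesis bC : forall x y, b x y = b y x.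
Hypothesis bD : forall x y z, b (vadd x y) z = b x z + b y z.
Hypothesis bZ : forall (a : R) x y, b (vscale a x) y = a * b x y.
Hypothesis qD : forall x y, q (vadd x y) = q x + q y + b x y.

Lemma q_vzero : q (vzero I R) = 0.
Proof. by rewrite -(vscale0 (vzero I R)) qZ expr2 !mul0r. Qed.

Lemma b_vzero_l y : b (vzero I R) y = 0.
Proof. by rewrite -(vscale0 (vzero I R)) bZ mul0r. Qed.

Lemma b_vzero_r y : b y (vzero I R) = 0.
Proof. by rewrite bC b_vzero_l. Qed.

Lemma b_vsum n (u : nat -> V) y : b (vsum n u) y = \sum_(k < n) b (u k) y.
Proof. by apply: (big_morph (b^~ y) (id1 := 0) (op1 := +%R)) => [v w|]; rewrite ?bD ?b_vzero_l. Qed.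

Lemma q_vsum n (u : nat -> V) :
  q (vsum n u) = \sum_(k < n) (q (u k) + \sum_(l < k) b (u l) (u k)).
Proof.
elim: n => [|n IH]; first by rewrite !big_ord0 q_vzero.
by rewrite !big_ord_recr /= qD IH b_vsum -addrA.
Qed.

(* Indexing the expansion of [q (vsum n u)] by all pairs makes it a sum over
   a finite type. *)
Definition qterm (u : nat -> V) n (p : 'I_n * 'I_n) : R :=
  if (p.2 < p.1)%N then b (u p.2) (u p.1)
  else if p.2 == p.1 then q (u p.1) else 0.

Lemma q_vsum_qterm n (u : nat -> V) : q (vsum n u) = \sum_(p : 'I_n * 'I_n) qterm u p.
Proof.
transitivity (\sum_(i < n) \sum_(j < n) qterm u (i, j)); last first.
  by rewrite pair_bigA; apply: eq_bigr => -[].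
rewrite q_vsum; apply: eq_bigr => k _.
rewrite (bigID (fun j : 'I_n => (j < k)%N)) /= addrC; congr (_ + _).
  rewrite (bigD1 k) /= ?ltnn // /qterm /= ltnn eqxx big1 ?addr0 //.
  by move=> j /andP [/negbTE -> /negbTE ->].
rewrite (big_ord_widen n (fun l => b (u l) (u k)) (ltnW (ltn_ord k))).
by apply: eq_bigr => j jk; rewrite /qterm /= jk.
Qed.

Lemma qterm_vmask P (u : nat -> V) n (p : 'I_n * 'I_n) :
  qterm (vmask P u) p = if P p.1 && P p.2 then qterm u p else 0.
Proof.
case: p => i j; rewrite /qterm /vmask /=.
have [->|ji] := eqVneq j i; first by rewrite ltnn andbb; case: (P i); rewrite ?q_vzero.
by case: (P i); case: (P j) => /=; case: ifP; rewrite ?b_vzero_l ?b_vzero_r.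
Qed.
Lemma exists_few_vmask_q_vsum n (u : nat -> V) : supertropical R ->
  exists K : seq nat, [/\ (size K <= 4)%N,
    tangible (q (vsum n u)) -> (size K <= 2)%N &
    q (vsum n (vmask (mem K) u)) = q (vsum n u)].
Proof.
move=> HR; have [C [C2 C1 CM]] := big_dominant_terms HR (@qterm u n).
exists ([seq val p.1 | p <- C] ++ [seq val p.2 | p <- C]).
rewrite size_cat !size_map q_vsum_qterm; split.
- exact: (leq_add C2 C2).
- by move=> /C1 C_le1; exact: (leq_add C_le1 C_le1).
- rewrite q_vsum_qterm; under eq_bigr do rewrite qterm_vmask.
  rewrite -big_mkcond; apply: CM => p Cp /=; rewrite unfold_in /= !mem_cat.
  by apply/andP; split; apply/orP; [left|right]; exact: map_f.
Qed.
End QuadraticForm.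
End FreeModule.

Theorem proposition6p4 (R : comPzSemiRingType) (I : Type)
  (q : freemod I R -> R) (x : freemod I R) :
  supertropical R -> is_quadratic_form q ->
  x <> vzero I R -> q_minimal q x ->
  (tangible (q x) -> supp_card_le x 2) /\
  (ghost (q x) -> supp_card_le x 4).
Proof.
move=> HR [qZ [b [bC [bD [bZ qD]]]]] _ xmin.
have [s [s_nodup s_supp]] := exists_supp_list x.
have xE := vsum_supp_term s_nodup s_supp.
have [K [K4 K2 qKE]] := exists_few_vmask_q_vsum qZ bC bD bZ qD (size s) (supp_term x s) HR.
rewrite xE in K2 qKE.
have xKE : \big[@vadd I R/vzero I R]_(k < size s) vmask (mem K) (supp_term x s) k = x.
  apply: q_minimal_eq xmin _ qKE; rewrite -[in X in vle _ X]xE.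
  exact: vle_vsum_vmask.
have s_le := vsum_vmask_supp_term s_nodup s_supp xKE.
have supp_s := supp_card_le_size s_supp.
split=> [qxT | _]; apply: supp_card_le_leq supp_s; apply: leq_trans s_le _.
  exact: K2.
exact: K4.
Qed.
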